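(* For every $n\ge 1$, if $\pi$ is uniformly random in $S_n$, then $$\mathrm{Cov}(\mathrm{inv}(\pi),\mathrm{maj}(\pi))=\frac{n(n-1)}{8}.$$ In particular, the correlation coefficient of $\mathrm{inv}$ and $\mathrm{maj}$ on $S_n$ equals $\frac{9(n-1)}{2n^2+3n-5}=\frac{9}{2n+5}$ for $n\ge 2$, which tends to $0$ as $n\to\infty$.
   Context: For a permutation $\pi=\pi_1\cdots\pi_n$ of $\{1,\dots,n\}$: $\mathrm{inv}(\pi)$ is the number of pairs $1\le i<j\le n$ with $\pi_i>\pi_j$, and $\mathrm{maj}(\pi)$ is the sum of all positions $i\in\{1,\dots,n-1\}$ with $\pi_i>\pi_{i+1}$. Both statistics have variance $(2n^3+3n^2-5n)/72$ under the uniform distribution on $S_n$. *)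

From HB Require Import structures.
From mathcomp Require Import all_boot all_order all_algebra all_fingroup.
Set Implicit Arguments. Unset Strict Implicit. Unset Printing Implicit Defensive.
Import Order.TTheory GRing.Theory Num.Theory.

(* Permutations of {1..n} are modelled as 'S_n = {perm 'I_n}, with 0-indexed
   positions/values; position i (0-indexed) corresponds to position i+1. *)

Definition inv_perm n (s : 'S_n) : nat :=
  #|[set p : 'I_n * 'I_n | (p.1 < p.2)%N && (s p.2 < s p.1)%N]|.

(* maj(pi) = sum of 1-indexed positions i (1 <= i <= n-1) with pi_i > pi_{i+1};
   the 0-indexed position i is a descent iff some j with val j = i+1 satisfies
   s j < s i; its 1-indexed position is i.+1. *)
Definition maj_perm n (s : 'S_n) : nat :=
  \sum_(i : 'I_n | [exists j : 'I_n, (val j == i.+1) && (s j < s i)%N]) i.+1.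

Local Open Scope ring_scope.

Definition Eperm (R : fieldType) n (X : 'S_n -> R) : R :=
  (\sum_(s : 'S_n) X s) / #|{perm 'I_n}|%:R.

Definition Covperm (R : fieldType) n (X Y : 'S_n -> R) : R :=
  Eperm (fun s => X s * Y s) - Eperm X * Eperm Y.

Definition Varperm (R : fieldType) n (X : 'S_n -> R) : R := Covperm X X.

Definition Corrperm (R : rcfType) n (X Y : 'S_n -> R) : R :=
  Covperm X Y / Num.sqrt (Varperm X * Varperm Y).

Definition invR (R : fieldType) n (s : 'S_n) : R := (inv_perm s)%:R.
Definition majR (R : fieldType) n (s : 'S_n) : R := (maj_perm s)%:R.

From HB Require Import structures.
From mathcomp Require Import all_boot all_order all_algebra all_fingroup.
From mathcomp Require Import zify ring.
Import Order.TTheory GRing.Theory Num.Theory.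
Set Implicit Arguments. Unset Strict Implicit. Unset Printing Implicit Defensive.

(* Append to s in S_(n+1) a new last entry that is exceeded by exactly w of the
   old entries, 0 <= w <= n+1.  This adds w to inv, adds n+1 to maj exactly when
   the old last entry was exceeded by fewer than w entries, and makes w the new
   number of entries exceeding the last one.  Each permutation of S_(n+2) arises
   once this way, so summing a function of the triple (inv, maj, entries above
   the last) over S_(n+2) amounts to summing over S_(n+1) its sum over w.  This
   step maps quadratic polynomials in the triple to quadratic polynomials, so all
   second moments are computed at once by induction on n; the covariance and the
   variances are read off from them. *)

Lemma ltn_bump2 h i j : (bump h i < bump h j) = (i < j).
Proof. by rewrite !ltnNge leq_bump2. Qed.

Lemma ltn_bump h i : (h < bump h i) = (h <= i).
Proof. by rewrite /bump; case: leqP; lia. Qed.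

Lemma bump_ltn h i : (bump h i < h) = (i < h).
Proof. by rewrite /bump; case: leqP; lia. Qed.

Lemma bump_lt_id h i : i < h -> bump h i = i.
Proof. by rewrite /bump ltnNge => /negbTE ->. Qed.

Lemma sum_ord_recr_lift n (F : 'I_n.+1 -> nat) :
  \sum_(i < n.+1) F i = \sum_(i < n) F (lift ord_max i) + F ord_max.
Proof.
rewrite big_ord_recr; congr (_ + _); apply: eq_bigr => i _.
by congr F; apply: val_inj; rewrite /= bump_lt_id.
Qed.

Definition weighted_inv n (c : nat -> nat -> nat) (s : 'S_n) :=
  \sum_(i < n) \sum_(j < n) (s j < s i) * c i j.

Lemma inv_perm_weighted n (s : 'S_n) : inv_perm s = weighted_inv (fun i j => i < j) s.
Proof.
rewrite /inv_perm /weighted_inv -sum1_card big_mkcond pair_bigA /=.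
by apply: eq_bigr => -[i j] _; rewrite inE /=; case: (i < j); case: (s j < s i).
Qed.

Lemma maj_perm_weighted n (s : 'S_n) :
  maj_perm s = weighted_inv (fun i j => (j == i.+1) * i.+1) s.
Proof.
rewrite /maj_perm /weighted_inv big_mkcond /=; apply: eq_bigr => i _.
case: (ltnP i.+1 n) => [lt_i1n | le_ni1].
  pose i1 := Ordinal lt_i1n.
  rewrite (bigD1 i1) //= eqxx mul1n big1 ?addn0 => [|j ne_j]; last first.
    rewrite -val_eqE in ne_j.
    by rewrite (_ : val j == i.+1 = false) ?muln0 //; apply/negbTE.
  case: existsP => [[j /andP[/eqP ij lt_sj]] | no_j].
    have -> : i1 = j by apply/val_inj; rewrite /= ij.
    by rewrite lt_sj mul1n.
  by case: ltnP => // lt_s; case: no_j; exists i1; rewrite eqxx lt_s.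
rewrite big1 => [|j _]; last first.
  rewrite (_ : val j == i.+1 = false) ?muln0 //.
  by apply: ltn_eqF; exact: leq_trans (ltn_ord j) le_ni1.
case: existsP => [[j /andP[/eqP ij _]]|] //.
by have := ltn_ord j; rewrite ij ltnNge le_ni1.
Qed.

Lemma weighted_inv_lift n c (s : 'S_n) (v : 'I_n.+1) :
  weighted_inv c (lift_perm ord_max v s) =
  weighted_inv c s + \sum_(i < n) (v <= s i) * c i n + \sum_(j < n) (s j < v) * c n j.
Proof.
rewrite /weighted_inv sum_ord_recr_lift sum_ord_recr_lift lift_perm_id ltnn mul0n addn0.
under eq_bigr => i _ do rewrite sum_ord_recr_lift.
rewrite big_split /= -!addnA; congr (_ + (_ + _)); apply: eq_bigr => i _.
- apply: eq_bigr => j _.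
  by rewrite !lift_perm_lift ltn_bump2 !bump_lt_id.
- by rewrite ?lift_perm_id lift_perm_lift ltn_bump bump_lt_id.
- by rewrite ?lift_perm_id lift_perm_lift bump_ltn bump_lt_id.
Qed.

Lemma sum_ord_geq n v : \sum_(k < n) (v <= k) = n - v.
Proof.
rewrite -[RHS]muln1 -sum_nat_const_nat big_geq_mkord big_mkcond /=.
by rewrite [RHS]big_mkcond; apply: eq_bigr => k _; case: leqP.
Qed.

Lemma inv_lift_perm n (s : 'S_n) (v : 'I_n.+1) :
  inv_perm (lift_perm ord_max v s) = inv_perm s + (n - v).
Proof.
rewrite !inv_perm_weighted weighted_inv_lift [X in _ + X]big1 ?addn0 => [|j _]; last first.
  by rewrite [n < j]ltnNge (ltnW (ltn_ord j)) muln0.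
congr (_ + _); rewrite -sum_ord_geq [RHS](reindex_inj (@perm_inj _ s)).
by apply: eq_bigr => i _; rewrite ltn_ord muln1.
Qed.

Lemma maj_lift_perm n (s : 'S_n.+1) (v : 'I_n.+2) :
  maj_perm (lift_perm ord_max v s) = maj_perm s + (v <= s ord_max) * n.+1.
Proof.
rewrite !maj_perm_weighted weighted_inv_lift [X in _ + X]big1 ?addn0 => [|j _]; last first.
  by rewrite ltn_eqF ?muln0 // leqW.
congr (_ + _); rewrite big_ord_recr /= eqxx mul1n big1 ?add0n // => i _.
by rewrite eqSS gtn_eqF ?muln0.
Qed.

Lemma lift_perm_max_inj n :
  injective (fun p : 'I_n.+1 * 'S_n => lift_perm ord_max p.1 p.2).
Proof.
move=> [v s] [v' s'] /= eq_lift.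
have eq_v : v = v' by rewrite -(lift_perm_id ord_max v s) eq_lift lift_perm_id.
rewrite -eq_v in eq_lift *; congr (_, _); apply/permP => i; apply: (@lift_inj _ v).
by rewrite -!(lift_perm_lift ord_max) eq_lift.
Qed.

Lemma big_perm_lift (T : Type) (idx : T) (op : Monoid.com_law idx) n (F : 'S_n.+1 -> T) :
  \big[op/idx]_(s : 'S_n.+1) F s =
  \big[op/idx]_(v : 'I_n.+1) \big[op/idx]_(s : 'S_n) F (lift_perm ord_max v s).
Proof.
rewrite pair_bigA (reindex _ (onW_bij _ (inj_card_bij (@lift_perm_max_inj n) _))) //.
by rewrite card_prod card_ord !card_Sn factS.
Qed.

Definition nabove_last n (s : 'S_n.+1) : nat := n - s ord_max.

(* The entry rev_ord w = n.+1 - w is exceeded by exactly w entries of the result. *)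
Lemma stats_lift_perm n (s : 'S_n.+1) (w : 'I_n.+2) :
  let t := lift_perm ord_max (rev_ord w) s in
  [/\ inv_perm t = inv_perm s + w,
      maj_perm t = maj_perm s + (nabove_last s < w) * n.+1 &
      nabove_last t = w].
Proof.
have le_wn1 : w <= n.+1 by rewrite -ltnS.
have le_sn : s ord_max <= n by rewrite -ltnS.
rewrite /nabove_last inv_lift_perm maj_lift_perm lift_perm_id /= subKn //.
by split=> //; congr (_ + nat_of_bool _ * _); apply/idP/idP; lia.
Qed.

Local Open Scope ring_scope.

Section Moments.

Variable R : numFieldType.

Definition moment n (f : nat -> nat -> nat -> R) : R :=
  \sum_(s : 'S_n.+1) f (inv_perm s) (maj_perm s) (nabove_last s).

Lemma moment_succ n f :
  moment n.+1 f =
  moment n (fun a b c => \sum_(w < n.+2) f (a + w)%N (b + (c < w) * n.+1)%N w).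
Proof.
rewrite /moment big_perm_lift exchange_big; apply: eq_bigr => s _.
rewrite (reindex_inj rev_ord_inj); apply: eq_bigr => w _.
by case: (stats_lift_perm s w) => -> -> ->.
Qed.

Lemma sum_ord_natr K : \sum_(w < K.+1) (w%:R : R) = K%:R * (K%:R + 1) / 2.
Proof.
elim: K => [|K IH]; first by rewrite big_ord1 !mul0r.
by rewrite big_ord_recr IH /= -natr1; field.
Qed.

Lemma sum_ord_natr_sqr K :
  \sum_(w < K.+1) (w%:R ^+ 2 : R) = K%:R * (K%:R + 1) * (2 * K%:R + 1) / 6.
Proof.
elim: K => [|K IH]; first by rewrite big_ord1 expr0n !mul0r.
by rewrite big_ord_recr IH /= -natr1; field.
Qed.

Lemma sum_ord_gtn (F : nat -> R) c K : (c <= K)%N ->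
  \sum_(w < K.+1) (c < w)%N%:R * F w = \sum_(w < K.+1) F w - \sum_(w < c.+1) F w.
Proof.
move=> le_cK; have le_c1K1 : (c.+1 <= K.+1)%N by [].
rewrite -(big_mkord xpredT (fun w => (c < w)%N%:R * F w)) -!(big_mkord xpredT F).
rewrite !(big_cat_nat (leq0n c.+1) le_c1K1) /= addrAC subrr add0r.
rewrite big1_seq ?add0r => [|w]; last first.
  by rewrite mem_index_iota ltnS => /andP[_ /leq_gtF->]; rewrite mul0r.
by apply: eq_big_nat => w /andP[lt_cw _]; rewrite lt_cw mul1r.
Qed.

Lemma sum_ord_quadratic K c (x0 x1 x2 y0 y1 : R) : (c <= K)%N ->
  \sum_(w < K.+1) (x0 + x1 * w%:R + x2 * w%:R ^+ 2 + (c < w)%N%:R * (y0 + y1 * w%:R)) =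
  x0 * (K%:R + 1) + x1 * (K%:R * (K%:R + 1) / 2)
  + x2 * (K%:R * (K%:R + 1) * (2 * K%:R + 1) / 6) + y0 * (K%:R - c%:R)
  + y1 * (K%:R * (K%:R + 1) / 2 - c%:R * (c%:R + 1) / 2).
Proof.
move=> le_cK; rewrite !big_split /= (sum_ord_gtn (fun w => y0 + y1 * w%:R)) //.
rewrite !big_split /= -!mulr_sumr !sumr_const !card_ord !sum_ord_natr sum_ord_natr_sqr.
by rewrite -!natr1; field.
Qed.

Record qform := QForm {
  q_1 : R; q_a : R; q_b : R; q_c : R;
  q_aa : R; q_bb : R; q_cc : R; q_ab : R; q_ac : R; q_bc : R }.

Definition qeval (q : qform) (a b c : nat) : R :=
  q_1 q + q_a q * a%:R + q_b q * b%:R + q_c q * c%:R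
  + q_aa q * a%:R ^+ 2 + q_bb q * b%:R ^+ 2 + q_cc q * c%:R ^+ 2
  + q_ab q * (a%:R * b%:R) + q_ac q * (a%:R * c%:R) + q_bc q * (b%:R * c%:R).

(* Expand the summand of sum_qeval_insert in powers of w and [c < w] and sum with
   sum_ord_quadratic; S0, S1, S2 are the sums of w^0, w^1, w^2 over 0 <= w <= K. *)
Definition qinsert (K : nat) (q : qform) : qform :=
  let k := K%:R in
  let S0 := k + 1 in let S1 := k * (k + 1) / 2 in
  let S2 := k * (k + 1) * (2 * k + 1) / 6 in
  QForm
    (q_1 q * S0 + (q_a q + q_c q) * S1 + (q_aa q + q_cc q + q_ac q) * S2
     + (q_b q * k + q_bb q * k ^+ 2) * k + (q_ab q + q_bc q) * k * S1)
    (q_a q * S0 + (2 * q_aa q + q_ac q) * S1 + q_ab q * k ^+ 2)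
    (q_b q * S0 + (q_ab q + q_bc q) * S1 + 2 * q_bb q * k ^+ 2)
    (- (q_b q * k + q_bb q * k ^+ 2) - (q_ab q + q_bc q) * k / 2)
    (q_aa q * S0) (q_bb q * S0) (- (q_ab q + q_bc q) * k / 2)
    (q_ab q * S0) (- q_ab q * k) (- 2 * q_bb q * k).

Lemma sum_qeval_insert K q a b c : (c <= K)%N ->
  \sum_(w < K.+1) qeval q (a + w)%N (b + (c < w) * K)%N w = qeval (qinsert K q) a b c.
Proof.
move=> le_cK; pose x : R := a%:R; pose y : R := b%:R; pose k : R := K%:R.
rewrite (eq_bigr (fun w : 'I_K.+1 =>
    (q_1 q + q_a q * x + q_b q * y + q_aa q * x ^+ 2 + q_bb q * y ^+ 2 + q_ab q * x * y)
  + (q_a q + q_c q + (2 * q_aa q + q_ac q) * x + (q_ab q + q_bc q) * y) * w%:R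
  + (q_aa q + q_cc q + q_ac q) * w%:R ^+ 2
  + (c < w)%N%:R * ((q_b q * k + 2 * q_bb q * k * y + q_bb q * k ^+ 2 + q_ab q * k * x)
                  + (q_ab q + q_bc q) * k * w%:R))) => [|w _]; last first.
  by rewrite /qeval !natrD natrM /x /y /k; case: (c < w)%N => /=; ring.
by rewrite sum_ord_quadratic // /qeval /qinsert /= /x /y /k; field.
Qed.

Definition qmean (n : nat) (q : qform) : R :=
  let k := n%:R in
  q_1 q + (q_a q + q_b q) * (k * (k + 1) / 4) + q_c q * (k / 2)
  + (q_aa q + q_bb q) * (k * (9 * k ^+ 3 + 22 * k ^+ 2 + 27 * k + 14) / 144)
  + q_cc q * (k * (2 * k + 1) / 6)
  + q_ab q * (k * (9 * k ^+ 3 + 18 * k ^+ 2 + 27 * k + 18) / 144)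
  + (q_ac q + q_bc q) * (k * (3 * k ^+ 2 + 5 * k + 4) / 24).

Lemma moment_qeval n q : moment n (qeval q) = n.+1`!%:R * qmean n q.
Proof.
elim: n q => [|n IH] q.
  rewrite /moment (eq_bigr (fun=> q_1 q)) => [|s _]; last first.
    rewrite inv_perm_weighted maj_perm_weighted /weighted_inv !big_ord1 ltnn.
    by rewrite /qeval /nabove_last sub0n /=; ring.
  by rewrite sumr_const card_Sn /qmean /= mul0r; field.
rewrite moment_succ.
transitivity (moment n (qeval (qinsert n.+1 q))).
  by apply: eq_bigr => s _; rewrite sum_qeval_insert // leqW // leq_subr.
rewrite IH [(n.+2)`!]factS natrM -mulrA mulrCA; congr (_ * _).
by rewrite /qmean /qinsert /= -!natr1; field.
Qed.

Lemma Eperm_qeval n (q : qform) (X : 'S_n.+1 -> R) :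
  (forall s, X s = qeval q (inv_perm s) (maj_perm s) (nabove_last s)) ->
  Eperm X = qmean n q.
Proof.
move=> eX; rewrite /Eperm (eq_bigr _ (fun s _ => eX s)) [LHS]/=.
have := moment_qeval n q; rewrite /moment => ->.
by rewrite card_Sn mulrC mulKf // pnatr_eq0 -lt0n fact_gt0.
Qed.

Lemma cov_inv_maj n : Covperm (@invR R n.+1) (@majR R n.+1) = (n.+1 * n)%:R / 8%:R.
Proof.
rewrite /Covperm (@Eperm_qeval n (QForm 0 0 0 0 0 0 0 1 0 0)) => [|s]; last first.
  by rewrite /qeval /invR /majR /=; ring.
rewrite (@Eperm_qeval n (QForm 0 1 0 0 0 0 0 0 0 0)) => [|s]; last first.
  by rewrite /qeval /invR /=; ring.
rewrite (@Eperm_qeval n (QForm 0 0 1 0 0 0 0 0 0 0)) => [|s]; last first.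
  by rewrite /qeval /majR /=; ring.
by rewrite /qmean /= natrM -natr1; field.
Qed.

Lemma var_inv n : Varperm (@invR R n.+1) = (n.+1 * n * (2 * n + 7))%:R / 72%:R.
Proof.
rewrite /Varperm /Covperm (@Eperm_qeval n (QForm 0 0 0 0 1 0 0 0 0 0)) => [|s]; last first.
  by rewrite /qeval /invR /=; ring.
rewrite (@Eperm_qeval n (QForm 0 1 0 0 0 0 0 0 0 0)) => [|s]; last first.
  by rewrite /qeval /invR /=; ring.
by rewrite /qmean /= !natrM natrD natrM -natr1; field.
Qed.

Lemma var_maj n : Varperm (@majR R n.+1) = (n.+1 * n * (2 * n + 7))%:R / 72%:R.
Proof.
rewrite /Varperm /Covperm (@Eperm_qeval n (QForm 0 0 0 0 0 1 0 0 0 0)) => [|s]; last first.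
  by rewrite /qeval /majR /=; ring.
rewrite (@Eperm_qeval n (QForm 0 0 1 0 0 0 0 0 0 0)) => [|s]; last first.
  by rewrite /qeval /majR /=; ring.
by rewrite /qmean /= !natrM natrD natrM -natr1; field.
Qed.

End Moments.

Lemma corr_inv_maj (R : rcfType) n : (0 < n)%N ->
  Corrperm (@invR R n.+1) (@majR R n.+1) = 9%:R / (2 * n.+1 + 5)%:R.
Proof.
move=> n_gt0; rewrite /Corrperm cov_inv_maj var_inv var_maj -expr2 sqrtr_sqr.
rewrite ger0_norm ?divr_ge0 ?ler0n //.
have n_neq0 : n%:R != 0 :> R by rewrite pnatr_eq0 -lt0n.
rewrite !natrM !natrD !natrM -!natr1; field.
by rewrite n_neq0 natr1 -natrM -natrD !pnatr_eq0.
Qed.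

Theorem mainTheorem4 (R : archiRcfType) :
  (forall n : nat, (1 <= n)%N ->
     Covperm (@invR R n) (@majR R n) = (n * (n - 1))%:R / 8%:R)
  /\ (forall n : nat, (2 <= n)%N ->
     Corrperm (@invR R n) (@majR R n)
       = 9%:R * (n - 1)%:R / (2 * n ^ 2 + 3 * n - 5)%:R
     /\ Corrperm (@invR R n) (@majR R n) = 9%:R / (2 * n + 5)%:R)
  /\ (forall eps : R, 0 < eps -> exists N : nat, forall n : nat, (N <= n)%N ->
     `|Corrperm (@invR R n) (@majR R n)| < eps).
Proof.
have corr n : (2 <= n)%N -> Corrperm (@invR R n) (@majR R n) = 9%:R / (2 * n + 5)%:R.
  by case: n => [|[|n]] // _; rewrite corr_inv_maj.
split; [|split].
- by case=> [|n] // _; rewrite cov_inv_maj subn1.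
- move=> n le_2n; rewrite corr //; split=> //.
  have -> : (2 * n ^ 2 + 3 * n - 5 = (n - 1) * (2 * n + 5))%N by nia.
  have n1_neq0 : (n - 1)%:R != 0 :> R by rewrite pnatr_eq0; lia.
  by rewrite natrM; field; rewrite n1_neq0 andbT -natrM -natrD pnatr_eq0 addn_eq0 andbF.
- move=> eps eps_gt0; exists (maxn 2 (Num.bound (9%:R / eps))) => n.
  rewrite geq_max => /andP[le_2n le_bn]; rewrite corr // ger0_norm ?divr_ge0 ?ler0n //.
  have pos : 0 < (2 * n + 5)%:R :> R by rewrite ltr0n addn_gt0 orbT.
  rewrite ltr_pdivrMr // mulrC -ltr_pdivrMr //.
  apply: (lt_le_trans (archi_boundP _)); first by rewrite divr_ge0 ?ler0n ?ltW.
  by rewrite ler_nat (leq_trans le_bn) //; lia.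
Qed.
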